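(* Let $\mathcal F=(\mathcal A,U,\varphi)$ be a sequential formalism, let $\mathcal S,\mathcal S'\subseteq\mathcal A$, and let $H$ be a refinement from $\mathcal S$ to $\mathcal S'$. Assume: (A1) $\mathcal S$ is algebraically stable through $H$; (A2) every algebraically consistent network over $\mathcal S'$ is satisfiable. Then every algebraically consistent network over $\mathcal S$ is satisfiable. If, in addition, $\mathcal S$ is a $\Rsh$-closed $\diamond\cap$-closed subset, then $\mathcal S$ is algebraically tractable.
   Context: A finite non-associative algebra is a tuple $(\mathcal A,\cup,\neg,\emptyset,\mathcal B,\diamond,\overline{\cdot},e)$ where $(\mathcal A,\cup,\neg,\emptyset,\mathcal B)$ is a finite Boolean algebra (with $x\cap y=\neg(\neg x\cup\neg y)$) and for all $x,y,z$: $\overline{\overline x}=x$, $\overline{x\cup y}=\overline x\cup\overline y$, $\overline{x\diamond y}=\overline y\diamond\overline x$, $e\diamond x=x\diamond e=x$, $x\diamond(y\cup z)=(x\diamond y)\cup(x\diamond z)$, $(x\diamond y)\cap\overline z=\emptyset\iff(y\diamond z)\cap\overline x=\emptyset$. $\mathcal B$ is the universal relation; $r\subseteq r'$ means $r\cup r'=r'$; atoms are basic relations. A projection operator from $\mathcal A$ to $\mathcal A'$ is a map $\Rsh$ with $\Rsh(r\cup r')=\Rsh r\cup\Rsh r'$, $\Rsh\overline r=\overline{\Rsh r}$. A finite multi-algebra is a product $\mathcal A_1\times\cdots\times\mathcal A_m$ of finite non-associative algebras with projection operators $\Rsh_i^j:\mathcal A_i\to\mathcal A_j$ for all distinct $i,j$.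 Relations $R=(R_1,\dots,R_m)$; basic if all $R_i$ are atoms; universal relation $\mathcal B=(\mathcal B_1,\dots,\mathcal B_m)$; $\subseteq,\diamond,\cap,\cup,\overline{\cdot}$ componentwise; $B\in R$ means $B$ basic, $B\subseteq R$. $R$ is closed under projection if $R_j\subseteq\Rsh_i^jR_i$ for all distinct $i,j$; the projection closure $\Rsh R$ is obtained by repeatedly replacing $R_j$ by $R_j\cap\Rsh_i^jR_i$ until a fixed point. A sequential formalism is $(\mathcal A,U,\varphi)$ with $\mathcal A$ a finite multi-algebra, $U\ne\emptyset$, $\varphi:\mathcal A\to 2^{U\times U}$ with $\varphi(\Rsh R)=\varphi(R)$, $\varphi(\overline R)=\varphi(R)^{-1}$, $\varphi((\emptyset,\dots,\emptyset))=\emptyset$, $\varphi(R\diamond R')\supseteq(\varphi(R)\circ\varphi(R'))\cap\varphi(\mathcal B)$, $\varphi(R\cap R')=\varphi(R)\cap\varphi(R')$, $\varphi(R)=\bigcup_{B\in R}\varphi(B)$. A network over $\mathcal S\subseteq\mathcal A$ is a finite set $E$ of variables with $N^{xy}\in\mathcal S$ for all distinct $x,y\in E$, $N^{yx}=\overline{N^{xy}}$; slices $N_i^{xy}=(N^{xy})_i$. A solution is $(u_x)_{x\in E}\subseteq U$ with $(u_x,u_y)\in\varphi(N^{xy})$ for all distinct $x,y$; $N$ is satisfiable if it has one. $N$ is trivially inconsistent if some $N_i^{xy}=\emptyset$; closed under composition if $N^{xz}\subseteq N^{xy}\diamond N^{yz}$ for all distinct $x,y,z$; closed under projection if every $N^{xy}$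 is; algebraically closed if both; algebraically consistent if algebraically closed and not trivially inconsistent. The algebraic closure of $N$ is obtained by repeatedly applying $N^{xz}\leftarrow\Rsh N^{xz}$ and $N^{xz}\leftarrow N^{xz}\cap(N^{xy}\diamond N^{yz})$ until a fixed point. A subset $\mathcal S$ is $\diamond\cap$-closed if $(R\diamond R')\cap R''\in\mathcal S$ for all $R,R',R''\in\mathcal S$; $\Rsh$-closed if $\Rsh R\in\mathcal S$ for all $R\in\mathcal S$; algebraically tractable if every network over $\mathcal S$ is satisfiable iff its algebraic closure is not trivially inconsistent. A refinement from $\mathcal S$ to $\mathcal S'$ is a function $H:\mathcal S\to\mathcal S'$ with $H(R)\subseteq R$ and $H(R)$ not trivially inconsistent (no empty component) whenever $R$ is not. $H(N)$ denotes the network obtained by replacing each $N^{xy}$ by $H(N^{xy})$. $\mathcal S$ is algebraically stable through $H$ if $H(N)$ is algebraically consistent for every algebraically consistent network $N$ over $\mathcal S$. *)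

From mathcomp Require Import all_boot.
From Stdlib Require Import Relations.Relation_Operators.
Set Implicit Arguments. Unset Strict Implicit. Unset Printing Implicit Defensive.

(* A finite Boolean algebra is represented as the powerset {set atom} of its
   (finite) set of atoms: union = :|:, complement = ~:, empty = set0,
   universal relation = setT; atoms (basic relations) are the singletons. *)
Record NAlg := {
  atom : finType;
  conv : {set atom} -> {set atom};
  comp : {set atom} -> {set atom} -> {set atom};
  ident : {set atom};
  conv_inv : forall x, conv (conv x) = x;
  conv_U : forall x y, conv (x :|: y) = conv x :|: conv y;
  conv_comp : forall x y, conv (comp x y) = comp (conv y) (conv x);
  ident_l : forall x, comp ident x = x;
  ident_r : forall x, comp x ident = x;
  comp_Ur : forall x y z, comp x (y :|: z) = comp x y :|: comp x z;
  triangle : forall x y z,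
    (comp x y :&: conv z = set0) <-> (comp y z :&: conv x = set0)
}.

Record MultiAlg := {
  arity : nat;
  alg : 'I_arity -> NAlg;
  proj : forall i j : 'I_arity, {set atom (alg i)} -> {set atom (alg j)};
  proj_U : forall i j, i != j -> forall r r',
      @proj i j (r :|: r') = @proj i j r :|: @proj i j r';
  proj_conv : forall i j, i != j -> forall r,
      @proj i j (conv r) = conv (@proj i j r)
}.

Section Rel.
Variable M : MultiAlg.

Definition mrel := forall i : 'I_(arity M), {set atom (@alg M i)}.

Definition req (R R' : mrel) := forall i, R i = R' i.
Definition rsub (R R' : mrel) := forall i, R i \subset R' i.
Definition rconv (R : mrel) : mrel := fun i => conv (R i).
Definition rcomp (R R' : mrel) : mrel := fun i => comp (R i) (R' i).
Definition rcap (R R' : mrel) : mrel := fun i => R i :&: R' i.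
Definition rempty : mrel := fun i => set0.
Definition runiv : mrel := fun i => setT.
Definition basic (B : mrel) := forall i, #|B i| = 1%N.
Definition triv_incons_rel (R : mrel) := exists i, R i = set0.

Definition proj_closed (R : mrel) :=
  forall i j : 'I_(arity M), i != j -> R j \subset @proj M i j (R i).

Definition proj_step (R R' : mrel) :=
  exists i j : 'I_(arity M), i != j /\
    R' j = R j :&: @proj M i j (R i) /\ (forall k, k != j -> R' k = R k).

Definition ProjClosure (R R' : mrel) :=
  clos_refl_trans mrel proj_step R R' /\ proj_closed R'.

Definition net (E : finType) := E -> E -> mrel.

Definition network_over (S : mrel -> Prop) (E : finType) (N : net E) :=
  (forall x y, x != y -> S (N x y)) /\
  (forall x y, x != y -> req (N y x) (rconv (N x y))).

Definition triv_incons (E : finType) (N : net E) :=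
  exists x y, x != y /\ triv_incons_rel (N x y).

Definition comp_closed (E : finType) (N : net E) :=
  forall x y z, x != y -> y != z -> x != z ->
    rsub (N x z) (rcomp (N x y) (N y z)).

Definition net_proj_closed (E : finType) (N : net E) :=
  forall x y, x != y -> proj_closed (N x y).

Definition alg_closed (E : finType) (N : net E) :=
  comp_closed N /\ net_proj_closed N.

Definition alg_consistent (E : finType) (N : net E) :=
  alg_closed N /\ ~ triv_incons N.

(* one step of algebraic closure, applied to N^{xz} (and, to keep
   N^{zx} = converse of N^{xz}, the converse update on N^{zx}) *)
Definition net_step (E : finType) (N N' : net E) :=
  exists x z, x != z /\ exists R' : mrel,
    (ProjClosure (N x z) R' \/
     exists y, y != x /\ y != z /\ req R' (rcap (N x z) (rcomp (N x y) (N y z))))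
    /\ req (N' x z) R' /\ req (N' z x) (rconv R')
    /\ (forall a b, (a, b) != (x, z) -> (a, b) != (z, x) -> req (N' a b) (N a b)).

Definition alg_closure (E : finType) (N N' : net E) :=
  clos_refl_trans (net E) (@net_step E) N N' /\ alg_closed N'.

Definition diamond_cap_closed (S : mrel -> Prop) :=
  forall R R' R'', S R -> S R' -> S R'' -> S (rcap (rcomp R R') R'').

Definition proj_closed_set (S : mrel -> Prop) :=
  forall R R', S R -> ProjClosure R R' -> S R'.

Definition refinement (S S' : mrel -> Prop) (H : mrel -> mrel) :=
  forall R, S R ->
    S' (H R) /\ rsub (H R) R /\ (~ triv_incons_rel R -> ~ triv_incons_rel (H R)).

Definition Hnet (H : mrel -> mrel) (E : finType) (N : net E) : net E :=
  fun x y => H (N x y).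

Definition alg_stable (S S' : mrel -> Prop) (H : mrel -> mrel) :=
  forall (E : finType) (N : net E), network_over S N -> alg_consistent N ->
    network_over S' (Hnet H N) /\ alg_consistent (Hnet H N).

End Rel.

Record SeqForm := {
  sf_M : MultiAlg;
  U : Type;
  U_ne : inhabited U;
  phi : mrel sf_M -> U -> U -> Prop;
  phi_proj : forall R R', ProjClosure R R' -> forall u v, phi R' u v <-> phi R u v;
  phi_conv : forall R u v, phi (rconv R) u v <-> phi R v u;
  phi_empty : forall u v, ~ phi (@rempty sf_M) u v;
  phi_comp : forall R R' u v w, phi R u v -> phi R' v w ->
      phi (@runiv sf_M) u w -> phi (rcomp R R') u w;
  phi_cap : forall R R' u v, phi (rcap R R') u v <-> phi R u v /\ phi R' u v;
  phi_basic : forall R u v,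
      phi R u v <-> exists B, basic B /\ rsub B R /\ phi B u v
}.

Definition solution (F : SeqForm) (E : finType) (N : net (sf_M F) E)
  (u : E -> U F) := forall x y, x != y -> phi (N x y) (u x) (u y).

Definition satisfiable (F : SeqForm) (E : finType) (N : net (sf_M F) E) :=
  exists u, solution N u.

Definition alg_tractable (F : SeqForm) (S : mrel (sf_M F) -> Prop) :=
  forall (E : finType) (N : net (sf_M F) E), network_over S N ->
    forall N', alg_closure N N' -> (satisfiable N <-> ~ triv_incons N').

(* Refining an algebraically consistent network over S yields, by (A1), an
   algebraically consistent network over S', which is satisfiable by (A2); a
   solution of the refined network solves the original one since H(R) is
   contained in R.  For tractability, algebraic closure never loses
   solutions, so a satisfiable network has a closure without empty
   components.  Conversely, when S is closed under projection closure and
   under (R o R') /\ R'', each closure step keeps the network over S and only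
   shrinks its relations, so a closure that is not trivially inconsistent is
   an algebraically consistent network over S, satisfiable by the first part,
   and its solutions solve the original network. *)
From mathcomp Require Import all_boot.
From Stdlib Require Import Relations.Relation_Operators FunctionalExtensionality.
Set Implicit Arguments. Unset Strict Implicit. Unset Printing Implicit Defensive.

Lemma clos_refl_trans_inv (A : Type) (R : A -> A -> Prop) (P : A -> Prop) :
  (forall a b, R a b -> P a -> P b) ->
  forall a b, clos_refl_trans A R a b -> P a -> P b.
Proof. by move=> stepP a b; elim=> [c d /stepP | // | c d e _ IH1 _ IH2 /IH1 /IH2]. Qed.

Section Converse.
Variable A : NAlg.
Implicit Types x y : {set atom A}.

Lemma convS x y : x \subset y -> conv x \subset conv y.
Proof. by move=> /setUidPr xy; rewrite -xy conv_U subsetUl. Qed.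

Lemma convI x y : conv (x :&: y) = conv x :&: conv y.
Proof.
apply/eqP; rewrite eqEsubset subsetI !convS ?subsetIl ?subsetIr //=.
rewrite -{1}(conv_inv (_ :&: _)) convS // subsetI.
by rewrite -{2}(conv_inv x) -{3}(conv_inv y) !convS ?subsetIl ?subsetIr.
Qed.

End Converse.

Section Relations.
Variable M : MultiAlg.
Implicit Types R : mrel M.

Lemma mrel_ext R R' : req R R' -> R = R'.
Proof. exact: functional_extensionality_dep. Qed.

Lemma rconvK R : rconv (rconv R) = R.
Proof. by apply: mrel_ext => i; apply: conv_inv. Qed.

Lemma rcapC R R' : rcap R R' = rcap R' R.
Proof. by apply: mrel_ext => i; apply: setIC. Qed.

Lemma rconv_rcap_rcomp R1 R2 R3 :
  rconv (rcap R1 (rcomp R2 R3)) = rcap (rconv R1) (rcomp (rconv R3) (rconv R2)).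
Proof. by apply: mrel_ext => i; rewrite /rconv /rcap /rcomp convI conv_comp. Qed.

Lemma ProjClosure_rconv R R' : ProjClosure R R' -> ProjClosure (rconv R) (rconv R').
Proof.
case=> steps R'closed; split=> [|i j ij]; last by rewrite /rconv proj_conv // convS ?R'closed.
elim: steps => [R1 R2 [i [j [ij [Rj Rk]]]] | R1 | R1 R2 R3 _ IH1 _ IH2].
- apply: rt_step; exists i, j; split=> //; split=> [|k kj].
    by rewrite /rconv Rj convI proj_conv.
  by rewrite /rconv Rk.
- exact: rt_refl.
- exact: rt_trans IH1 IH2.
Qed.

Lemma ProjClosure_rsub R R' : ProjClosure R R' -> rsub R' R.
Proof.
case=> steps _; elim: steps => [R1 R2 [i [j [_ [Rj Rk]]]] k | R1 k | R1 R2 R3 _ IH1 _ IH2 k].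
- by have [->|kj] := eqVneq k j; rewrite ?Rj ?subsetIl ?Rk.
- exact: subxx.
- exact: subset_trans (IH2 k) (IH1 k).
Qed.

End Relations.

Section NetworkUpdate.
Variables (M : MultiAlg) (E : finType).
Implicit Types (N : net M E) (R : mrel M).

Definition net_update N (x z : E) R : net M E := fun a b =>
  if (a, b) == (x, z) then R else if (a, b) == (z, x) then rconv R else N a b.

Definition net_rsub N' N := forall a b, a != b -> rsub (N' a b) (N a b).

Lemma net_stepP N N' : net_step N N' ->
  exists x z R, [/\ x != z,
    ProjClosure (N x z) R \/
      (exists2 y, y != x /\ y != z & R = rcap (N x z) (rcomp (N x y) (N y z)))
    & N' = net_update N x z R].
Proof.
case=> x [z [xz [R [upd [Nxz [Nzx Nab]]]]]]; exists x, z, R; split=> //.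
  by case: upd => [|[y [yx [yz /mrel_ext ->]]]]; [left | right; exists y].
apply: functional_extensionality => a; apply: functional_extensionality => b.
rewrite /net_update; case: eqP => [[-> ->]|/eqP n1]; first exact: mrel_ext.
case: eqP => [[-> ->]|/eqP n2]; first exact: mrel_ext.
by apply: mrel_ext; apply: Nab.
Qed.

Lemma pair_eq_swap (a b x z : E) : ((b, a) == (x, z)) = ((a, b) == (z, x)).
Proof. by rewrite !xpair_eqE andbC. Qed.

Lemma net_update_conv N x z R a b : a != b -> req (N b a) (rconv (N a b)) ->
  net_update N x z R b a = rconv (net_update N x z R a b).
Proof.
move=> ab Nba; rewrite /net_update pair_eq_swap (pair_eq_swap a b z x).
case: eqP => [[az bx]|_].
  by move: ab; rewrite az bx xpair_eqE => /negbTE ->; rewrite rconvK.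
by case: eqP => _ //; apply: mrel_ext.
Qed.

Lemma net_update_rsub N x z R : (forall a b, a != b -> req (N b a) (rconv (N a b))) ->
  rsub R (N x z) -> net_rsub (net_update N x z R) N.
Proof.
move=> convN sR a b ab; rewrite /net_update.
case: eqP => [[-> ->] //|_]; case: eqP => [[az bx]|_] i //.
move: ab; rewrite az bx eq_sym => xz; rewrite convN //.
exact/convS/sR.
Qed.

Variable S : mrel M -> Prop.

Lemma network_over_update N x z R :
  network_over S N -> S R -> S (rconv R) -> network_over S (net_update N x z R).
Proof.
case=> SN convN SR SR'; split=> a b ab.
  by rewrite /net_update; do 2!case: ifP => _ //; apply: SN.
by rewrite (net_update_conv _ _ _ ab (convN a b ab)) => i.
Qed.

Hypotheses (S_ProjClosure : proj_closed_set S) (S_capcomp : diamond_cap_closed S).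

Lemma net_step_over N N' :
  network_over S N -> net_step N N' -> network_over S N' /\ net_rsub N' N.
Proof.
move=> NS /net_stepP [x [z [R [xz upd ->]]]]; have [SN convN] := NS.
have zx : z != x by rewrite eq_sym.
have [SR SR' sR] : [/\ S R, S (rconv R) & rsub R (N x z)].
  case: upd => [pc | [y [yx yz] ->]].
    split; [exact: S_ProjClosure (SN x z xz) pc | | exact: ProjClosure_rsub pc].
    apply: S_ProjClosure (SN z x zx) _.
    by rewrite (mrel_ext (convN x z xz)); apply: ProjClosure_rconv.
  have xy : x != y by rewrite eq_sym.
  split; last by move=> i; apply: subsetIl.
    by rewrite rcapC; apply: S_capcomp; apply: SN; rewrite // eq_sym.
  rewrite rconv_rcap_rcomp -(mrel_ext (convN x z xz)) -(mrel_ext (convN x y xy)).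
  rewrite -(mrel_ext (convN y z yz)) rcapC.
  by apply: S_capcomp; apply: SN; rewrite // eq_sym.
split; [exact: network_over_update | exact: net_update_rsub].
Qed.

Lemma net_closure_over N N' : network_over S N ->
  clos_refl_trans (net M E) (@net_step M E) N N' -> network_over S N' /\ net_rsub N' N.
Proof.
move=> NS steps.
apply: (clos_refl_trans_inv (P := fun N' => network_over S N' /\ net_rsub N' N)) steps _.
  move=> N1 N2 step [N1S sub1]; have [N2S sub2] := net_step_over N1S step.
  by split=> // a b ab i; apply: subset_trans (sub2 a b ab i) (sub1 a b ab i).
by split=> // a b _ i.
Qed.

End NetworkUpdate.

Section Solutions.
Variables (F : SeqForm) (E : finType).
Implicit Types (N : net (sf_M F) E) (R : mrel (sf_M F)) (u : E -> U F).

Lemma phiS R R' a b : rsub R R' -> phi R a b -> phi R' a b.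
Proof.
move=> RR' /phi_basic [B [basicB [BR phiB]]]; apply/phi_basic; exists B.
by split=> //; split=> // i; apply: subset_trans (BR i) (RR' i).
Qed.

Lemma solution_rsub N N' u : net_rsub N' N -> solution N' u -> solution N u.
Proof. by move=> sub solN' a b ab; apply: phiS (sub a b ab) (solN' a b ab). Qed.

Lemma solution_update N x z R u :
  solution N u -> phi R (u x) (u z) -> solution (net_update N x z R) u.
Proof.
move=> solN phiR a b ab; rewrite /net_update.
case: eqP => [[-> ->] //|_]; case: eqP => [[-> ->]|_]; first exact/phi_conv.
exact: solN.
Qed.

Lemma net_step_solution N N' u : net_step N N' -> solution N u -> solution N' u.
Proof.
move=> /net_stepP [x [z [R [xz upd ->]]]] solN; apply: solution_update => //.
case: upd => [pc | [y [yx yz] ->]]; first by apply/(phi_proj pc)/solN.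
apply/phi_cap; split; first exact: solN.
apply: (phi_comp (v := u y)); [apply: solN; rewrite eq_sym // | exact: solN |].
(* [phi_comp] only holds inside [phi runiv], which the constraint on (x, z) provides. *)
by apply: phiS (solN x z xz) => i; apply: subsetT.
Qed.

Lemma net_closure_solution N N' u :
  clos_refl_trans (net (sf_M F) E) (@net_step (sf_M F) E) N N' ->
  solution N u -> solution N' u.
Proof.
move=> steps; apply: (clos_refl_trans_inv (P := fun N => solution N u)) steps.
by move=> N1 N2; apply: net_step_solution.
Qed.

Lemma solution_not_triv_incons N u : solution N u -> ~ triv_incons N.
Proof.
move=> solN [x [y [xy [i Nxy0]]]].
have /phi_basic [B [basicB [BN _]]] := solN x y xy.
by have := basicB i; move: (BN i); rewrite Nxy0 subset0 => /eqP ->; rewrite cards0.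
Qed.

End Solutions.

Section Refinement.
Variables (F : SeqForm) (S S' : mrel (sf_M F) -> Prop).

Lemma refinement_satisfiable (H : mrel (sf_M F) -> mrel (sf_M F)) :
  refinement S S' H -> alg_stable S S' H ->
  (forall (E : finType) (N : net (sf_M F) E),
     network_over S' N -> alg_consistent N -> satisfiable N) ->
  forall (E : finType) (N : net (sf_M F) E),
    network_over S N -> alg_consistent N -> satisfiable N.
Proof.
move=> refH stableH satS' E N NS consN.
have [HNS' consHN] := stableH E N NS consN.
have [u solHN] := satS' E _ HNS' consHN; exists u.
by apply: solution_rsub solHN => a b ab; apply: (refH _ (NS.1 a b ab)).2.1.
Qed.

Lemma alg_tractable_of_satisfiable : proj_closed_set S -> diamond_cap_closed S ->
  (forall (E : finType) (N : net (sf_M F) E),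
     network_over S N -> alg_consistent N -> satisfiable N) ->
  alg_tractable S.
Proof.
move=> S_ProjClosure S_capcomp satS E N NS N' [steps closedN']; split.
  by case=> u /(net_closure_solution steps); apply: solution_not_triv_incons.
move=> consistent; have [N'S sub] := net_closure_over S_ProjClosure S_capcomp NS steps.
by have [u solN'] := satS E N' N'S (conj closedN' consistent); exists u; apply: solution_rsub solN'.
Qed.

End Refinement.

Theorem mainTheorem2 (F : SeqForm) (S S' : mrel (sf_M F) -> Prop)
  (H : mrel (sf_M F) -> mrel (sf_M F))
  (hH : refinement S S' H)
  (A1 : alg_stable S S' H)
  (A2 : forall (E : finType) (N : net (sf_M F) E),
          network_over S' N -> alg_consistent N -> satisfiable N) :
  (forall (E : finType) (N : net (sf_M F) E),
      network_over S N -> alg_consistent N -> satisfiable N) /\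
  (proj_closed_set S -> diamond_cap_closed S -> alg_tractable S).
Proof.
have satS := refinement_satisfiable hH A1 A2.
by split=> // S_ProjClosure S_capcomp; apply: alg_tractable_of_satisfiable.
Qed.
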